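(* For every $n\ge 1$, $\mathbb{E}_n[U_n]=H_n=\sum_{j=1}^n \frac1j$; that is, the expected number of unrestricted rows of a uniformly random type-B permutation tableau of size $n$ is the $n$-th harmonic number.
   Context: A Ferrers diagram is a left-justified array of cells whose row lengths weakly decrease from top to bottom (rows of length $0$ are allowed). Its half-perimeter is the number of rows plus the number of columns. If the diagram has $c$ columns, the shifted Ferrers diagram is obtained by inserting $c$ new left-justified rows above it, of lengths $c,c-1,\dots,1$ from top to bottom; the rightmost cell of each inserted row is a diagonal cell. A type-B permutation tableau of size $n$ is a filling of a shifted Ferrers diagram of half-perimeter $n$ with $0$'s and $1$'s such that: (1) every column contains at least one $1$; (2) no $0$ has both a $1$ above it in its column and a $1$ to its left in its row; (3) if a diagonal cell contains $0$ then every cell of its row contains $0$. Let $\mathcal{B}_n$ be the set of such tableaux, $\mathbb{P}_n$ the uniform probability measure on $\mathcal{B}_n$, $\mathbb{E}_n$ its expectation. A restricted $0$ is a cell containing $0$ that either has a $1$ above it in its column or is a diagonal cell. A row of the shifted diagram (possibly of length $0$) is unrestricted if it contains no restricted $0$. For $T\in\mathcal{B}_n$, $U_n(T)$ is the number of unrestricted rows of $T$. *)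

From mathcomp Require Import all_boot all_order all_algebra.
Set Implicit Arguments. Unset Strict Implicit. Unset Printing Implicit Defensive.
Import GRing.Theory Num.Theory.

(* Encoding.  A type-B tableau of size n has a shifted diagram with exactly  *)
(* n rows (c inserted staircase rows + k = n - c rows of the Ferrers diagram) *)
(* and c <= n columns, so it fits in the n x n grid 'I_n * 'I_n.             *)
(* A candidate object is a triple (c, lam, fill):                            *)
(*   c    : number of columns (0 <= c <= n);                                 *)
(*   lam  : lam i = length of row i of the Ferrers diagram (i < n - c);      *)
(*          normalised by lam i = 0 for i >= n - c;                          *)
(*   fill : fill (r, j) = entry of cell (r, j) of the shifted diagram        *)
(*          (true = 1, false = 0); normalised to false outside the diagram.  *)
(* Rows r < c of the shifted diagram are the inserted staircase rows:        *)
(* row r has length r+1 and its rightmost cell (r, r) is its diagonal cell,  *)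
(* which is the top cell of column r.  Row r >= c is row r - c of the         *)
(* Ferrers diagram.  Rows are numbered from the top, columns from the left.  *)

Definition candB (n : nat) : finType :=
  ('I_n.+1 * {ffun 'I_n -> 'I_n.+1} * {ffun 'I_n * 'I_n -> bool})%type.

Section TypeB.
Variable n : nat.
Implicit Types (t : candB n) (r j : 'I_n).

Definition ncols t : nat := t.1.1.
Definition lam t (i : 'I_n) : nat := t.1.2 i.
Definition fill t r j : bool := t.2 (r, j).

Definition rowlen t r : nat :=
  if (r < ncols t)%N then r.+1
  else (if insub (r - ncols t)%N is Some i then lam t i else 0%N).

Definition in_cell t r j : bool := (j < rowlen t r)%N.

Definition diag_cell t r j : bool := (r < ncols t)%N && (val j == val r).

Definition wf_shape t : bool :=
  [forall i : 'I_n, forall i' : 'I_n, (i <= i')%N ==> (lam t i' <= lam t i)%N]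
  && [forall i : 'I_n, (lam t i <= ncols t)%N]
  && [forall i : 'I_n, (n - ncols t <= i)%N ==> (lam t i == 0%N)]
  && [forall r : 'I_n, forall j : 'I_n, ~~ in_cell t r j ==> ~~ fill t r j].

Definition one_above t r j : bool :=
  [exists r' : 'I_n, [&& (r' < r)%N, in_cell t r' j & fill t r' j]].

Definition one_left t r j : bool :=
  [exists j' : 'I_n, [&& (j' < j)%N, in_cell t r j' & fill t r j']].

Definition cond_columns t : bool :=
  [forall j : 'I_n, (j < ncols t)%N ==> [exists r : 'I_n, in_cell t r j && fill t r j]].

Definition cond_Le t : bool :=
  [forall r : 'I_n, forall j : 'I_n, (in_cell t r j && ~~ fill t r j) ==>
                        ~~ (one_above t r j && one_left t r j)].

Definition cond_diag t : bool :=
  [forall r : 'I_n, forall j : 'I_n, (diag_cell t r j && ~~ fill t r j) ==>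
                        [forall j' : 'I_n, in_cell t r j' ==> ~~ fill t r j']].

Definition is_typeB t : bool :=
  [&& wf_shape t, cond_columns t, cond_Le t & cond_diag t].

Definition typeB_tableaux : {set candB n} := [set t | is_typeB t].

Definition restricted_zero t r j : bool :=
  [&& in_cell t r j, ~~ fill t r j & one_above t r j || diag_cell t r j].

Definition unrestricted_row t r : bool := [forall j : 'I_n, ~~ restricted_zero t r j].

(* U_n(T): number of unrestricted rows (rows of length 0 included) *)
Definition U_rows t : nat := #|[set r : 'I_n | unrestricted_row t r]|.

End TypeB.

Definition uniform_expect (T : finType) (A : {set T}) (X : T -> nat) : rat :=
  ((\sum_(t in A) (X t)%:R) / (#|A|)%:R)%R.

Definition harmonic (n : nat) : rat := (\sum_(j < n) ((j.+1)%:R)^-1)%R.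

From mathcomp Require Import all_boot all_order all_algebra.
From mathcomp Require Import zify ring.
From Stdlib Require Import FunctionalExtensionality.
Set Implicit Arguments. Unset Strict Implicit. Unset Printing Implicit Defensive.
Import GRing.Theory Num.Theory.

(* We compute the generating polynomial Z_n(Y) = \sum_(T in B_n) Y ^ U(T) and
   show Z_n(Y) = \prod_(j < n) 2 (Y + j); then E_n[U] = Z_n'(1) / Z_n(1)
   = \sum_(j < n) 1 / (j + 1).  The product formula follows from a recursive
   decomposition of B_(n+1): each tableau T of size n+1 arises from a unique
   t = shrink T in B_n, either (a) by adding an empty bottom row, which adds
   one unrestricted row, or (b) by adding a first column whose set S of 1s is
   any non-empty set of rows among the new top row and the rows lying below
   an unrestricted row of t.  In case (b) the number of unrestricted rows of T
   depends only on S, and summing over S gives 2 Y (1 + Y) ^ U(t) for the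
   whole fiber of t, i.e. Z_(n+1)(Y) = 2 Y Z_n(1 + Y). *)

Definition row_len (c : nat) (L : nat -> nat) (r : nat) : nat :=
  if r < c then r.+1 else L (r - c).

Definition framed (m c : nat) (L : nat -> nat) (F : nat -> nat -> bool) : Prop :=
  [/\ c <= m, (forall i, L i <= c), (forall i, m - c <= i -> L i = 0)
    & (forall r j, F r j -> j < row_len c L r)].

Definition decreasing (L : nat -> nat) : Prop :=
  forall i i', i <= i' -> L i' <= L i.

Definition columns_hit (c : nat) (F : nat -> nat -> bool) : Prop :=
  forall j, j < c -> exists r, F r j.

Definition le_rule (c : nat) (L : nat -> nat) (F : nat -> nat -> bool) : Prop :=
  forall r j, j < row_len c L r -> ~~ F r j ->
    (exists2 r', r' < r & F r' j) -> (exists2 j', j' < j & F r j') -> False.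

Definition diag_rule (c : nat) (F : nat -> nat -> bool) : Prop :=
  forall r, r < c -> ~~ F r r -> forall j, ~~ F r j.

Definition valid (m c : nat) (L : nat -> nat) (F : nat -> nat -> bool) : Prop :=
  [/\ framed m c L F, decreasing L, columns_hit c F, le_rule c L F & diag_rule c F].

Definition unrestricted (c : nat) (L : nat -> nat) (F : nat -> nat -> bool) (r : nat) : Prop :=
  forall j, j < row_len c L r -> ~~ F r j ->
    (exists2 r', r' < r & F r' j) \/ (r < c /\ j = r) -> False.

Section Framed.
Variables (m c : nat) (L : nat -> nat) (F : nat -> nat -> bool).
Hypothesis fr : framed m c L F.

Lemma row_len_out r : m <= r -> row_len c L r = 0.
Proof.
case: fr => cm _ L0 _ mr; rewrite /row_len; have -> : (r < c) = false by lia.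
by apply: L0; lia.
Qed.

Lemma row_len_le r : row_len c L r <= m.
Proof.
case: fr => cm Lc _ _; rewrite /row_len; case: ifP => h; first lia.
exact: leq_trans (Lc _) cm.
Qed.

Lemma fill_bound r j : F r j -> (r < m) && (j < m).
Proof.
move=> Frj; have [_ _ _ FC] := fr; have := FC _ _ Frj; have := row_len_le r.
case: (leqP m r) => rm; first by rewrite (row_len_out rm).
by move=> *; apply/andP; split=> //; lia.
Qed.

End Framed.

Lemma valid_add_row m c L F :
  valid m c L F <-> valid m.+1 c L F /\ row_len c L m = 0.
Proof.
split.
- case=> fr dec col le dg; split; last exact: (row_len_out fr (leqnn m)).
  case: fr => cm Lc L0 FC; split => //; split => //; first lia.
  by move=> i hi; apply: L0; lia.
- case=> -[[cm Lc L0 FC] dec col le dg] hm.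
  have cm' : c <= m by move: hm; rewrite /row_len; case: ltnP => //; lia.
  split => //; split => // i hi; move: hm; rewrite /row_len ltnNge cm' /= => hm.
  by have := dec (m - c) i hi; rewrite hm; lia.
Qed.

(* Adding a new first column whose 1s are the rows in g: every row moves one *)
(* step down and grows by one cell; the new top row is a staircase row.      *)
Definition col_lam (m c : nat) (L : nat -> nat) (i : nat) : nat :=
  if i < m - c then (L i).+1 else 0.
Definition col_fill (g : nat -> bool) (F : nat -> nat -> bool) (r j : nat) : bool :=
  if j == 0 then g r else if r == 0 then false else F r.-1 j.-1.

Lemma row_len_col m c L r : c <= m ->
  row_len c.+1 (col_lam m c L) r =
  if r == 0 then 1 else if r <= m then (row_len c L r.-1).+1 else 0.
Proof.
move=> cm; rewrite /row_len /col_lam; case: r => [|r] //=.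
rewrite ltnS subSS; case: (ltnP r c) => rc; first by have -> : r < m by lia.
case: (ltnP r m) => rm; first by have -> : r - c < m - c by lia.
by have -> : r - c < m - c = false by lia.
Qed.

Definition admissible_col (c : nat) (L : nat -> nat) (F : nat -> nat -> bool)
    (g : nat -> bool) : Prop :=
  forall r, g r -> r = 0 \/ unrestricted c L F r.-1.

Lemma framed_col m c L F (g : nat -> bool) : framed m c L F -> (forall r, g r -> r <= m) ->
  framed m.+1 c.+1 (col_lam m c L) (col_fill g F).
Proof.
move=> fr gb; have [cm Lc L0 FC] := fr; split; first lia.
- by move=> i; rewrite /col_lam; case: ifP => _ //; rewrite ltnS.
- by move=> i hi; rewrite /col_lam; have -> : i < m - c = false by lia.
- move=> r j; rewrite /col_fill row_len_col //; case: eqP => [->|/eqP j0].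
    by move=> /gb rm; case: eqP => // _; rewrite rm.
  case: eqP => // /eqP r0 Frj; have /andP[rm _] := fill_bound fr Frj.
  have := FC _ _ Frj; have -> : r <= m by lia.
  lia.
Qed.

Lemma decreasing_col m c L : (forall i, m - c <= i -> L i = 0) ->
  decreasing (col_lam m c L) <-> decreasing L.
Proof.
move=> L0; split => dec i i' ii'.
- case: (ltnP i' (m - c)) => h; last by rewrite L0.
  have := dec i i' ii'; rewrite /col_lam h; have -> : i < m - c by lia.
  by rewrite ltnS.
- rewrite /col_lam; case: ifP => h //; have -> : i < m - c by lia.
  by have := dec i i' ii'; lia.
Qed.

Lemma columns_hit_col c F (g : nat -> bool) :
  columns_hit c.+1 (col_fill g F) <-> (exists r, g r) /\ columns_hit c F.
Proof.
split.
- move=> col; split; first by have [r] := col 0 isT; exists r.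
  by move=> j /(col j.+1) [[|r] Fr] //; exists r.
- move=> [[r0 gr0] col] [|j] hj; first by exists r0.
  by have [r Fr] := col j hj; exists r.+1.
Qed.

(* Rules (2) and (3) after adding a column: the old tableau satisfies them,   *)
(* and a 1 in the new column never sits left of a restricted 0.             *)
Lemma rules_col m c L F (g : nat -> bool) : framed m c L F ->
  le_rule c L F -> diag_rule c F -> admissible_col c L F g ->
  le_rule c.+1 (col_lam m c L) (col_fill g F) /\ diag_rule c.+1 (col_fill g F).
Proof.
move=> fr le dg adm; have cm : c <= m by case: fr.
split.
- move=> r j; rewrite row_len_col // /col_fill.
  case: j => [|j]; first by move=> _ _ _ [j'].
  case: r => [|r] //= hj nF [r' hr' Fr'] [j' hj' Fj'].
  move: hj; case: ifP => // rm hj.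
  move: Fr'; case: r' hr' => [|r'] //= hr' Fr'.
  move: Fj'; case: j' hj' => [|j'] /= hj' Fj'.
    by case: (adm _ Fj') => // /= U; apply: (U j) => //; left; exists r'.
  by apply: (le r j) => //; [exists r' | exists j'].
- move=> r hr; rewrite /col_fill; case: r hr => [|r] /= hr.
    by move=> ng0 [|j].
  move=> nF [|j] /=; last exact: dg.
  apply/negP => gr; case: (adm _ gr) => // /= U.
  apply: (U r) => //; last by right.
  by move: hr; rewrite /row_len ltnS => ->.
Qed.

Lemma rules_of_col m c L F (g : nat -> bool) : framed m c L F ->
  (forall r, g r -> r <= m) ->
  le_rule c.+1 (col_lam m c L) (col_fill g F) -> diag_rule c.+1 (col_fill g F) ->
  [/\ le_rule c L F, diag_rule c F & admissible_col c L F g].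
Proof.
move=> fr gb le' dg'; have cm : c <= m by case: fr.
split.
- move=> r j hj nF [r' hr' Fr'] [j' hj' Fj'].
  have rm : r < m by case: (ltnP r m) => // h; rewrite (row_len_out fr h) in hj.
  apply: (le' r.+1 j.+1); first by rewrite row_len_col //= rm.
  + by rewrite /col_fill.
  + by exists r'.+1.
  + by exists j'.+1.
- by move=> r hr nF j; have := dg' r.+1 hr nF j.+1; rewrite /col_fill.
- move=> [|r] gr; first by left.
  right => j hj nF [[r' hr' Fr']|[hrc e]].
    apply: (le' r.+1 j.+1); first by rewrite row_len_col //= gb.
    + by rewrite /col_fill.
    + by exists r'.+1.
    + by exists 0.
  rewrite /= in e hrc; subst j.
  by have := dg' r.+1 hrc nF 0; rewrite /col_fill gr.
Qed.

Lemma valid_add_col m c L F (g : nat -> bool) : framed m c L F ->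
  (forall r, g r -> r <= m) ->
  valid m.+1 c.+1 (col_lam m c L) (col_fill g F) <->
  [/\ valid m c L F, (exists r, g r) & admissible_col c L F g].
Proof.
move=> fr gb; have [cm Lc L0 FC] := fr; split.
- case=> _ /(decreasing_col L0) dec /columns_hit_col [ne col] le' dg'.
  by have [le dg adm] := rules_of_col fr gb le' dg'.
- case=> -[_ dec col le dg] ne adm; have [le' dg'] := rules_col fr le dg adm.
  split => //; [exact: framed_col | exact/(decreasing_col L0) | exact/columns_hit_col].
Qed.

Lemma unrestricted_col_top m c L F (g : nat -> bool) : c <= m ->
  unrestricted c.+1 (col_lam m c L) (col_fill g F) 0 <-> g 0.
Proof.
move=> cm; split.
- move=> U; apply/negPn/negP => ng; apply: (U 0).
  + by rewrite row_len_col.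
  + by rewrite /col_fill.
  + by right.
- move=> g0 j; rewrite row_len_col //= ltnS leqn0 => /eqP ->.
  by rewrite /col_fill g0.
Qed.

Lemma unrestricted_col_succ m c L F (g : nat -> bool) r : c <= m -> r < m ->
  unrestricted c.+1 (col_lam m c L) (col_fill g F) r.+1 <->
  unrestricted c L F r /\ (g r.+1 \/ forall r', r' <= r -> ~~ g r').
Proof.
move=> cm rm; split.
- move=> U; split.
    move=> j hj nF H; apply: (U j.+1); first by rewrite row_len_col //= rm.
      by rewrite /col_fill.
    by case: H => [[r' hr' Fr']|[hrc ->]]; [left; exists r'.+1 | right].
  case gr: (g r.+1); first by left.
  right => r' hr'; apply/negP => gr'; apply: (U 0).
  + by rewrite row_len_col //= rm.
  + by rewrite /col_fill gr.
  + by left; exists r'; rewrite // /col_fill.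
- case=> U H j; rewrite row_len_col //= rm; case: j => [|j] hj.
    rewrite /col_fill /= => ng [[r' hr' gr']|[_ //]].
    case: H => [gr|H]; first by rewrite gr in ng.
    by move: gr'; rewrite (negPf (H _ hr')).
  rewrite /col_fill /= => nF [[r' hr' Fr']|[hrc [e]]].
    move: Fr'; case: r' hr' => [|r'] //= hr' Fr'.
    by apply: (U j) => //; left; exists r'.
  by apply: (U j) => //; right.
Qed.

(* Conversely, a valid tableau whose last row is non-empty is obtained by    *)
(* adding its own first column to the tableau left after deleting it.       *)
Lemma col_decompose m c L F : valid m.+1 c L F -> 0 < row_len c L m ->
  [/\ c = c.-1.+1, framed m c.-1 (fun i => (L i).-1) (fun r j => F r.+1 j.+1),
      L = col_lam m c.-1 (fun i => (L i).-1)
    & F = col_fill (fun r => F r 0) (fun r j => F r.+1 j.+1)].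
Proof.
move=> [fr dec _ _ _] hm; have [cm Lc L0 FC] := fr.
have c0 : 0 < c.
  case: c cm Lc L0 FC hm {fr} => // _ Lc _ _; rewrite /row_len /=.
  by have := Lc (m - 0); rewrite subn0; case: (L m).
split; first by rewrite prednK.
- split; first lia.
  + by move=> i; have := Lc i; lia.
  + by move=> i hi; rewrite L0 //; lia.
  + move=> r j Fr; have := FC _ _ Fr; rewrite /row_len.
    case: (ltnP r.+1 c) => h1.
      have -> : r < c.-1 by lia.
      lia.
    have -> : r < c.-1 = false by lia.
    have -> : r - c.-1 = r.+1 - c by lia.
    lia.
- apply: functional_extensionality => i; rewrite /col_lam.
  case: ifP => h; last by rewrite L0 //; lia.
  have cm' : (m < c) = false by lia.
  have Lm : 0 < L (m - c) by move: hm; rewrite /row_len cm'.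
  by have := dec i (m - c) (ltac:(lia)); lia.
- apply: functional_extensionality => r; apply: functional_extensionality => j.
  rewrite /col_fill; case: eqP => [->|/eqP j0] //.
  case: eqP => [->|/eqP r0]; last by rewrite !prednK //; lia.
  by apply/negP => F0; have := FC _ _ F0; rewrite /row_len c0; lia.
Qed.

Section Encoding.
Variable n : nat.
Implicit Types (t : candB n).

Definition lam_nat t (i : nat) : nat := oapp (fun i' : 'I_n => lam t i') 0 (insub i).
Definition fill_nat t (r j : nat) : bool :=
  oapp (fun r' : 'I_n => oapp (fun j' : 'I_n => fill t r' j') false (insub j))
    false (insub r).

Lemma lam_natE t (i : 'I_n) : lam_nat t i = lam t i.
Proof. by rewrite /lam_nat valK. Qed.

Lemma lam_nat_out t i : n <= i -> lam_nat t i = 0.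
Proof. by move=> h; rewrite /lam_nat; case: insubP => //= i' hi _; lia. Qed.

Lemma fill_natE t (r j : 'I_n) : fill_nat t r j = fill t r j.
Proof. by rewrite /fill_nat !valK. Qed.

Lemma fill_nat_out t r j : (n <= r) || (n <= j) -> fill_nat t r j = false.
Proof.
rewrite /fill_nat; case/orP => h.
  by rewrite (@insubF _ _ _ r) //; apply/negbTE; rewrite -leqNgt.
case: (insub r) => //= r'.
by rewrite (@insubF _ _ _ j) //; apply/negbTE; rewrite -leqNgt.
Qed.

Lemma in_cellE t r j : in_cell t r j = (j < row_len (ncols t) (lam_nat t) r).
Proof. by rewrite /in_cell /rowlen /row_len /lam_nat; case: ifP => //; case: insub. Qed.

Lemma ncols_le t : ncols t <= n.
Proof. by rewrite -ltnS ltn_ord. Qed.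

Lemma wf_shapeP t : wf_shape t <->
  framed n (ncols t) (lam_nat t) (fill_nat t) /\ decreasing (lam_nat t).
Proof.
rewrite /wf_shape -!andbA; split.
- case/and4P => /forallP dec /forallP Lc /forallP L0 /forallP FC.
  split; first split.
  + exact: ncols_le.
  + move=> i; case: (ltnP i n) => hi; last by rewrite lam_nat_out.
    by rewrite (lam_natE t (Ordinal hi)).
  + move=> i hi; case: (ltnP i n) => hi'; last by rewrite lam_nat_out.
    by rewrite (lam_natE t (Ordinal hi')); apply/eqP; have := L0 (Ordinal hi'); rewrite /= hi.
  + move=> r j; case: (ltnP r n) => hr; last by rewrite fill_nat_out ?hr.
    case: (ltnP j n) => hj; last by rewrite fill_nat_out ?hj ?orbT.
    rewrite (fill_natE t (Ordinal hr) (Ordinal hj)) => Fr.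
    have /forallP /(_ (Ordinal hj)) := FC (Ordinal hr).
    by rewrite Fr in_cellE /= implybF negbK.
  + move=> i i' ii'; case: (ltnP i' n) => hi'; last by rewrite lam_nat_out.
    have hi : i < n by apply: leq_ltn_trans hi'.
    rewrite (lam_natE t (Ordinal hi)) (lam_natE t (Ordinal hi')).
    by have /forallP /(_ (Ordinal hi')) := dec (Ordinal hi); rewrite /= ii'.
- case=> [[_ Lc L0 FC] dec]; apply/and4P; split.
  + apply/forallP => i; apply/forallP => i'; apply/implyP => ii'.
    by rewrite -!lam_natE; apply: dec.
  + by apply/forallP => i; rewrite -lam_natE.
  + by apply/forallP => i; apply/implyP => hi; rewrite -lam_natE L0.
  + apply/forallP => r; apply/forallP => j; apply/implyP.
    by rewrite in_cellE -fill_natE; apply: contra => /FC.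
Qed.

Section FramedTableau.
Variable t : candB n.
Hypothesis fr : framed n (ncols t) (lam_nat t) (fill_nat t).

Lemma one_aboveP (r j : 'I_n) :
  one_above t r j <-> exists2 r', r' < r & fill_nat t r' j.
Proof.
have [_ _ _ FC] := fr; split.
  by case/existsP => r' /and3P[h1 h2 h3]; exists r' => //; rewrite fill_natE.
case=> r' hr' Fr; have hr'n : r' < n by apply: ltn_trans hr' (ltn_ord r).
apply/existsP; exists (Ordinal hr'n); rewrite /= hr' in_cellE /=.
by rewrite (FC _ _ Fr) -fill_natE.
Qed.

Lemma one_leftP (r j : 'I_n) :
  one_left t r j <-> exists2 j', j' < j & fill_nat t r j'.
Proof.
have [_ _ _ FC] := fr; split.
  by case/existsP => j' /and3P[h1 h2 h3]; exists j' => //; rewrite fill_natE.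
case=> j' hj' Fr; have hj'n : j' < n by apply: ltn_trans hj' (ltn_ord j).
apply/existsP; exists (Ordinal hj'n); rewrite /= hj' in_cellE /=.
by rewrite (FC _ _ Fr) -fill_natE.
Qed.

Lemma cond_columnsP : cond_columns t <-> columns_hit (ncols t) (fill_nat t).
Proof.
have [cn _ _ FC] := fr; split.
- move=> /forallP Co j hj; have hjn : j < n by apply: leq_trans hj cn.
  have := Co (Ordinal hjn); rewrite /= hj => /existsP [r /andP[_ Fr]].
  by exists r; rewrite (fill_natE t r (Ordinal hjn)).
- move=> Co; apply/forallP => j; apply/implyP => /Co [r Fr].
  have /andP[hr _] := fill_bound fr Fr.
  by apply/existsP; exists (Ordinal hr); rewrite in_cellE /= (FC _ _ Fr) -fill_natE.
Qed.

Lemma cond_LeP : cond_Le t <-> le_rule (ncols t) (lam_nat t) (fill_nat t).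
Proof.
split.
- move=> /forallP Le r j hj nF ab lf.
  have hrn : r < n by case: (ltnP r n) => // h; rewrite (row_len_out fr h) in hj.
  have hjn : j < n by apply: leq_trans hj (row_len_le fr _).
  have /forallP /(_ (Ordinal hjn)) := Le (Ordinal hrn).
  rewrite in_cellE /= hj -fill_natE nF /=; move/negP; apply; apply/andP; split.
    exact/(one_aboveP (Ordinal hrn) (Ordinal hjn)).
  exact/(one_leftP (Ordinal hrn) (Ordinal hjn)).
- move=> Le; apply/forallP => r; apply/forallP => j; apply/implyP.
  rewrite in_cellE -fill_natE => /andP[hj nF]; apply/negP => /andP[].
  by rewrite (one_aboveP r j) (one_leftP r j); apply: Le.
Qed.

Lemma cond_diagP : cond_diag t <-> diag_rule (ncols t) (fill_nat t).
Proof.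
have [cn _ _ FC] := fr; split.
- move=> /forallP Di r hr nF j; have hrn : r < n by apply: leq_trans hr cn.
  case: (ltnP j n) => hjn; last by rewrite fill_nat_out // hjn orbT.
  have /forallP /(_ (Ordinal hrn)) := Di (Ordinal hrn).
  rewrite /diag_cell /= hr eqxx -fill_natE nF /= => /forallP /(_ (Ordinal hjn)).
  rewrite in_cellE /= -fill_natE; apply: contraTN => Fj.
  by rewrite (FC _ _ Fj) /= Fj.
- move=> Di; apply/forallP => r; apply/forallP => j; apply/implyP.
  rewrite /diag_cell => /andP[/andP[hr /eqP e]].
  rewrite -fill_natE e => nF; apply/forallP => j'; apply/implyP => _.
  by rewrite -fill_natE; apply: Di.
Qed.

Lemma unrestricted_rowP (r : 'I_n) :
  unrestricted_row t r <-> unrestricted (ncols t) (lam_nat t) (fill_nat t) r.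
Proof.
split.
- move=> /forallP U j hj nF C; have hjn : j < n by apply: leq_trans hj (row_len_le fr _).
  have := U (Ordinal hjn); rewrite /restricted_zero in_cellE /= hj -fill_natE nF /=.
  move/negP; apply; apply/orP.
  case: C => [ab|[hr e]]; first by left; apply/(one_aboveP r (Ordinal hjn)).
  by right; rewrite /diag_cell /= hr e eqxx.
- move=> U; apply/forallP => j; rewrite /restricted_zero in_cellE -fill_natE.
  apply/negP => /and3P[hj nF /orP[/(one_aboveP r j) ab|]].
    exact: (U j hj nF (or_introl ab)).
  by rewrite /diag_cell => /andP[hr /eqP e]; exact: (U j hj nF (or_intror (conj hr e))).
Qed.

End FramedTableau.

Lemma typeBP t : is_typeB t <-> valid n (ncols t) (lam_nat t) (fill_nat t).
Proof.
rewrite /is_typeB; split.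
- case/and4P => /wf_shapeP [fr dec] col le dg.
  by split => //; [exact/cond_columnsP | exact/cond_LeP | exact/cond_diagP].
- case=> fr dec col le dg; apply/and4P; split; first exact/wf_shapeP.
  + exact/cond_columnsP.
  + exact/cond_LeP.
  + exact/cond_diagP.
Qed.

Lemma typeB_framed t : is_typeB t -> framed n (ncols t) (lam_nat t) (fill_nat t).
Proof. by move/typeBP; case. Qed.

Definition encode (c : nat) (L : nat -> nat) (F : nat -> nat -> bool) : candB n :=
  (inord c, [ffun i : 'I_n => inord (L i)], [ffun p : 'I_n * 'I_n => F p.1 p.2]).

Lemma encode_ncols c L F : c <= n -> ncols (encode c L F) = c.
Proof. by move=> h; rewrite /ncols /= inordK. Qed.

Lemma encode_lam c L F : framed n c L F -> lam_nat (encode c L F) = L.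
Proof.
case=> cn Lc L0 FC; apply: functional_extensionality => i; case: (ltnP i n) => hi.
  by rewrite (lam_natE _ (Ordinal hi)) /lam /= ffunE /= inordK //; have := Lc i; lia.
by rewrite lam_nat_out // L0 //; lia.
Qed.

Lemma encode_fill c L F : framed n c L F -> fill_nat (encode c L F) = F.
Proof.
move=> fr; apply: functional_extensionality => r; apply: functional_extensionality => j.
case: (ltnP r n) => hr; last first.
  by rewrite fill_nat_out ?hr //; apply/esym/negbTE/negP => /(fill_bound fr); lia.
case: (ltnP j n) => hj; last first.
  by rewrite fill_nat_out ?hj ?orbT //; apply/esym/negbTE/negP => /(fill_bound fr); lia.
by rewrite (fill_natE _ (Ordinal hr) (Ordinal hj)) /fill /= ffunE.
Qed.

Lemma encodeK t : encode (ncols t) (lam_nat t) (fill_nat t) = t.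
Proof.
case: t => [[c l] f]; rewrite /encode /ncols /=; congr (_, _, _).
- exact: inord_val.
- apply/ffunP => i; rewrite ffunE; apply: val_inj.
  by rewrite /= (lam_natE (c, l, f) i) inordK //; apply: ltn_ord.
- by apply/ffunP => -[r j]; rewrite ffunE /= (fill_natE (c, l, f) r j).
Qed.

Lemma encode_typeB c L F : framed n c L F -> is_typeB (encode c L F) <-> valid n c L F.
Proof.
move=> fr; have cn : c <= n by case: fr.
by rewrite typeBP encode_ncols // encode_lam // encode_fill.
Qed.

End Encoding.

Section FreeRows.
Variable m : nat.
Implicit Types (A S : {set 'I_m.+1}).

(* row r is unrestricted after adding a first column with 1s exactly in S   *)
(* (provided the row it comes from was): the top row needs its diagonal 1, *)
(* a lower row needs a 1 in the new column or no 1 above that cell          *)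
Definition stays_free S (r : 'I_m.+1) : bool :=
  if r == ord0 then r \in S
  else (r \in S) || [forall r' : 'I_m.+1, (r' < r) ==> (r' \notin S)].

Definition free_rows A S : {set 'I_m.+1} := [set r in A | stays_free S r].

Lemma free_rows_set0 A : ord0 \in A -> #|free_rows A set0| = #|A|.-1.
Proof.
move=> A0; rewrite (cardsD1 ord0 A) A0 /=; apply: eq_card => r.
rewrite !inE /stays_free; case: (r =P ord0) => [->|_] /=; first by rewrite inE andbF.
rewrite inE /=; have -> : [forall r' : 'I_m.+1, (r' < r) ==> (r' \notin set0)].
  by apply/forallP => r'; rewrite inE implybT.
by rewrite andbT.
Qed.

Section LowestRow.
Variables (A : {set 'I_m.+1}) (z : 'I_m.+1).
Hypotheses (zA : z \in A) (z0 : z != ord0) (zmax : forall i, i \in A -> i <= z).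

Lemma lt_lowest r : r \in A -> r != z -> r < z.
Proof.
move=> rA rz; have := zmax rA; rewrite leq_eqVlt => /orP[/eqP e|//].
by case/eqP: rz; apply: val_inj.
Qed.

(* a 1 elsewhere above z leaves z restricted *)
Lemma free_rows_lowest_out S : S \subset A :\ z -> S != set0 ->
  #|free_rows A S| = #|free_rows (A :\ z) S|.
Proof.
move=> sS ne; apply: eq_card => r; rewrite !inE.
case: (r =P z) => [->|/eqP rz] //=; rewrite zA /= /stays_free (negbTE z0).
have /subsetP sS' := sS.
have -> : (z \in S) = false by apply/negbTE/negP => /sS'; rewrite !inE eqxx.
apply/negbTE/negP => /forallP H; case/set0Pn: ne => s sS0.
have := sS' _ sS0; rewrite !inE => /andP[sz sA].
by have := H s; rewrite sS0 (lt_lowest sA sz).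
Qed.

(* a 1 in row z keeps z unrestricted and does not affect the rows above *)
Lemma free_rows_lowest_in S : S \subset A :\ z ->
  #|free_rows A (z |: S)| = (#|free_rows (A :\ z) S|).+1.
Proof.
move=> sS; have zS : z \notin S.
  by apply/negP => /(subsetP sS); rewrite !inE eqxx.
suff -> : free_rows A (z |: S) = z |: free_rows (A :\ z) S.
  by rewrite cardsU1 !inE eqxx.
apply/setP => r; rewrite !inE.
case: (r =P z) => [->|/eqP rz] /=; first by rewrite zA /stays_free (negbTE z0) !inE eqxx.
case rA: (r \in A) => //=; have rz' := lt_lowest rA rz.
rewrite /stays_free !inE (negbTE rz) /=; case: (r == ord0) => //=; congr (_ || _).
apply: eq_forallb => r'; case h: (r' < r) => //=; rewrite !inE.
by have -> : (r' == z) = false by apply/negbTE/negP => /eqP e; move: h; rewrite e; lia.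
Qed.

End LowestRow.

Local Open Scope ring_scope.

Definition col_sum (R : comNzRingType) (Y : R) A : R :=
  \sum_(S : {set 'I_m.+1} | (S \subset A) && (S != set0)) Y ^+ #|free_rows A S|.

(* removing the lowest row z: choices of S split by whether z is in S *)
Lemma col_sum_lowest (R : comNzRingType) (Y : R) A z :
  ord0 \in A -> z \in A -> z != ord0 -> (forall i, i \in A -> i <= z)%N ->
  col_sum Y A = (1 + Y) * col_sum Y (A :\ z) + Y ^+ #|A :\ z|.
Proof.
move=> A0 zA z0 zmax; set A' := A :\ z.
have A0' : ord0 \in A' by rewrite !inE eq_sym z0.
have with_z : \sum_(S : {set 'I_m.+1} | (S \subset A) && (S != set0) && (z \in S))
    Y ^+ #|free_rows A S| = Y * \sum_(S : {set 'I_m.+1} | S \subset A') Y ^+ #|free_rows A' S|.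
  rewrite (reindex_onto (fun S' => z |: S') (fun S => S :\ z)) /=; last first.
    by move=> S /andP[_ zS]; rewrite setD1K.
  rewrite mulr_sumr; apply: eq_big => S'.
    rewrite setU11 andbT subsetD1 subUset sub1set zA /=.
    have -> : (z |: S' != set0) by apply/set0Pn; exists z; rewrite setU11.
    rewrite andbT; case zS: (z \in S').
      rewrite andbF; apply/negbTE/nandP; right; apply/negP => /eqP e.
      by move: (congr1 (fun X : {set 'I_m.+1} => z \in X) e); rewrite !inE eqxx zS.
    by rewrite setU1K ?zS // eqxx andbT.
  move=> /andP[/andP[/andP[h1 _] _] /eqP h4].
  have sS : S' \subset A'.
    rewrite subsetD1; move: h1; rewrite subUset => /andP[_ ->] /=.
    by rewrite -h4 !inE eqxx.
  by rewrite (free_rows_lowest_in zA z0 zmax sS) exprS.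
have without_z : \sum_(S : {set 'I_m.+1} | (S \subset A) && (S != set0) && (z \notin S))
    Y ^+ #|free_rows A S| = col_sum Y A'.
  apply: eq_big => S; first by rewrite subsetD1 andbAC.
  move=> /andP[/andP[sA ne] zS].
  by rewrite (free_rows_lowest_out zA z0 zmax _ ne) // subsetD1 sA.
have all_sub : \sum_(S : {set 'I_m.+1} | S \subset A') Y ^+ #|free_rows A' S| = Y ^+ #|A'|.-1 + col_sum Y A'.
  by rewrite (bigD1 set0) ?sub0set //= (free_rows_set0 A0').
rewrite {1}/col_sum (bigID (fun S : {set 'I_m.+1} => z \in S)) /= with_z without_z all_sub.
have : (0 < #|A'|)%N by apply/card_gt0P; exists ord0.
by case: #|A'| => // k _ /=; rewrite exprS; ring.
Qed.

Lemma col_sum_card (R : comNzRingType) (Y : R) k A : ord0 \in A -> #|A| = k.+1 ->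
  col_sum Y A + Y ^+ k.+1 = 2%:R * Y * (1 + Y) ^+ k.
Proof.
elim: k A => [|k IH] A A0 cA.
  have [x Ax] : exists x, A = [set x] by apply/cards1P; rewrite cA.
  have ex : x = ord0 by move: A0; rewrite Ax inE => /eqP.
  subst x; rewrite /col_sum (big_pred1 [set ord0]); last first.
    move=> S; rewrite /= Ax subset1; case: (S =P set0) => [->|/eqP ne].
      by rewrite andbF; apply/esym/negbTE/negP => /eqP/setP/(_ ord0); rewrite !inE eqxx.
    by rewrite orbF andbT.
  have -> : #|free_rows A [set ord0]| = 1%N.
    rewrite -(cards1 (@ord0 m)); apply: eq_card => r; rewrite !inE Ax inE /stays_free.
    by case: (r =P ord0) => [->|_]; rewrite ?inE ?eqxx.
  by rewrite expr1 expr0 mulr1 mulr2n mulrDl mul1r.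
case: (arg_maxnP (fun i : 'I_m.+1 => nat_of_ord i) A0) => z zA' zmax.
have zA : z \in A := zA'.
have z0 : z != ord0.
  apply/negP => /eqP ez; have : A \subset [set ord0].
    apply/subsetP => i iA; rewrite inE; have := zmax i iA; rewrite ez /= => h.
    by apply/eqP/val_inj => /=; lia.
  by move/subset_leq_card; rewrite cards1 cA.
have cA' : #|A :\ z| = k.+1 by move: cA; rewrite (cardsD1 z) zA add1n => -[].
have A0' : ord0 \in A :\ z by rewrite !inE eq_sym z0.
have IH' := IH _ A0' cA'.
rewrite (col_sum_lowest Y A0 zA z0 zmax) cA'.
have -> : col_sum Y (A :\ z) = 2%:R * Y * (1 + Y) ^+ k - Y ^+ k.+1 by rewrite -IH' addrK.
by rewrite !exprS; ring.
Qed.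

End FreeRows.

Lemma card_set_sum (T : finType) (P : pred T) : #|[set r | P r]| = \sum_r (P r : nat).
Proof.
rewrite -sum1_card big_mkcond /=; apply: eq_bigr => r _.
by rewrite inE; case: (P r).
Qed.

Section Growth.
Variable n : nat.
Implicit Types (t : candB n) (T : candB n.+1) (S : {set 'I_n.+1}).

Definition add_row t : candB n.+1 := encode n.+1 (ncols t) (lam_nat t) (fill_nat t).

Definition mem_nat S (r : nat) : bool := oapp (fun r' : 'I_n.+1 => r' \in S) false (insub r).

Definition add_col t S : candB n.+1 :=
  encode n.+1 (ncols t).+1 (col_lam n (ncols t) (lam_nat t)) (col_fill (mem_nat S) (fill_nat t)).

Definition last_row_empty T : bool := row_len (ncols T) (lam_nat T) n == 0.

Definition shrink T : candB n :=
  if last_row_empty T then encode n (ncols T) (lam_nat T) (fill_nat T)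
  else encode n (ncols T).-1 (fun i => (lam_nat T i).-1) (fun r j => fill_nat T r.+1 j.+1).

Definition first_col T : {set 'I_n.+1} := [set r : 'I_n.+1 | fill_nat T r 0].

Definition free_row t (k : nat) : bool :=
  oapp (fun k' : 'I_n => unrestricted_row t k') false (insub k).

Definition col_choices t : {set 'I_n.+1} :=
  [set r : 'I_n.+1 | (r == ord0) || free_row t r.-1].

Lemma mem_natE S (r : 'I_n.+1) : mem_nat S r = (r \in S).
Proof. by rewrite /mem_nat valK. Qed.

Lemma mem_nat_bound S r : mem_nat S r -> r <= n.
Proof. by rewrite /mem_nat; case: insubP => //= r' _ <- _; rewrite -ltnS. Qed.

Lemma mem_nat_nonempty S : (exists r, mem_nat S r) <-> S != set0.
Proof.
split.
- case=> r gr; apply/set0Pn; exists (Ordinal (mem_nat_bound gr : r < n.+1)).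
  by rewrite -mem_natE.
- by case/set0Pn => r rS; exists r; rewrite mem_natE.
Qed.

Lemma free_rowP t k : framed n (ncols t) (lam_nat t) (fill_nat t) -> k < n ->
  free_row t k <-> unrestricted (ncols t) (lam_nat t) (fill_nat t) k.
Proof.
move=> fr hk; rewrite /free_row; case: insubP => [k' _ <- /=|]; last by rewrite hk.
exact: unrestricted_rowP.
Qed.

Lemma admissible_choices t S : framed n (ncols t) (lam_nat t) (fill_nat t) ->
  admissible_col (ncols t) (lam_nat t) (fill_nat t) (mem_nat S) <-> S \subset col_choices t.
Proof.
move=> fr; split.
- move=> adm; apply/subsetP => r rS; rewrite inE.
  have := adm r; rewrite mem_natE rS => /(_ isT) [r0|U].
    by apply/orP; left; apply/eqP; apply: val_inj.
  case: (r =P ord0) => //= /eqP r0; apply/(free_rowP fr) => //.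
  have : nat_of_ord r != 0 by apply: contra r0 => /eqP e; apply/eqP/val_inj.
  by have := ltn_ord r; lia.
- move=> /subsetP sub r gr; have rn := mem_nat_bound gr.
  have := sub (Ordinal (rn : r < n.+1)); rewrite -mem_natE /= => /(_ gr).
  rewrite inE => /orP[/eqP e|U]; first by left; move: e => /(congr1 val).
  case: r rn gr U => [|r] rn gr U; first by left.
  by right; apply/(free_rowP fr).
Qed.

Lemma add_row_spec t : is_typeB t ->
  [/\ is_typeB (add_row t), ncols (add_row t) = ncols t, lam_nat (add_row t) = lam_nat t,
      fill_nat (add_row t) = fill_nat t & last_row_empty (add_row t)].
Proof.
move=> /typeBP /valid_add_row [V hR]; have fr : framed n.+1 (ncols t) (lam_nat t) (fill_nat t).
  by case: V.
rewrite /add_row /last_row_empty encode_ncols ?encode_lam ?encode_fill //; last by case: fr.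
by split => //; [apply/encode_typeB | rewrite hR].
Qed.

Lemma shrink_add_row t : is_typeB t -> shrink (add_row t) = t.
Proof.
move=> tB; have [_ e1 e2 e3 e4] := add_row_spec tB.
by rewrite /shrink e4 e1 e2 e3 encodeK.
Qed.

(* the new empty row is unrestricted, and the other rows are unchanged *)
Lemma U_add_row t : is_typeB t -> U_rows (add_row t) = (U_rows t).+1.
Proof.
move=> tB; have [tB' e1 e2 e3 _] := add_row_spec tB.
have fr := typeB_framed tB; have fr' := typeB_framed tB'.
rewrite /U_rows !card_set_sum big_ord_recr /=.
have -> : unrestricted_row (add_row t) ord_max.
  by apply/(unrestricted_rowP fr') => j; rewrite e1 e2 /= (row_len_out fr (leqnn n)).
rewrite addn1; congr _.+1; apply: eq_bigr => r _; congr nat_of_bool.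
apply/idP/idP.
  by move/(unrestricted_rowP fr'); rewrite e1 e2 e3 => /(unrestricted_rowP fr).
by move/(unrestricted_rowP fr) => U; apply/(unrestricted_rowP fr'); rewrite e1 e2 e3.
Qed.

Lemma add_col_spec t S : is_typeB t -> S \subset col_choices t -> S != set0 ->
  [/\ is_typeB (add_col t S), ncols (add_col t S) = (ncols t).+1,
      lam_nat (add_col t S) = col_lam n (ncols t) (lam_nat t),
      fill_nat (add_col t S) = col_fill (mem_nat S) (fill_nat t)
    & ~~ last_row_empty (add_col t S)].
Proof.
move=> /typeBP V sub ne; have fr : framed n (ncols t) (lam_nat t) (fill_nat t) by case: V.
have cn : ncols t <= n by case: fr.
have V' := proj2 (valid_add_col fr (@mem_nat_bound S))
  (And3 V (proj2 (mem_nat_nonempty S) ne) (proj2 (admissible_choices S fr) sub)).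
have fr' : framed n.+1 (ncols t).+1 (col_lam n (ncols t) (lam_nat t))
  (col_fill (mem_nat S) (fill_nat t)) by case: V'.
rewrite /add_col /last_row_empty encode_ncols // (encode_lam fr') (encode_fill fr').
split => //; first exact/encode_typeB.
by rewrite row_len_col // leqnn; case: (n == 0).
Qed.

Lemma shrink_add_col t S : is_typeB t -> S \subset col_choices t -> S != set0 ->
  shrink (add_col t S) = t.
Proof.
move=> tB sub ne; have [_ e1 e2 e3 e4] := add_col_spec tB sub ne.
have [cn Lc L0 FC] := typeB_framed tB.
rewrite /shrink (negbTE e4) e1 e2 e3 /= -[RHS]encodeK; f_equal.
apply: functional_extensionality => i; rewrite /col_lam; case: ifP => // h.
by rewrite L0 //; lia.
Qed.

Lemma first_col_add_col t S : is_typeB t -> S \subset col_choices t -> S != set0 ->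
  first_col (add_col t S) = S.
Proof.
move=> tB sub ne; have [_ _ _ e3 _] := add_col_spec tB sub ne.
by apply/setP => r; rewrite inE e3 /col_fill /= mem_natE.
Qed.

Lemma unrestricted_add_col t S (r : 'I_n.+1) :
  is_typeB t -> S \subset col_choices t -> S != set0 ->
  unrestricted_row (add_col t S) r <-> r \in free_rows (col_choices t) S.
Proof.
move=> tB sub ne; have [tB' e1 e2 e3 _] := add_col_spec tB sub ne.
have fr := typeB_framed tB; have cn : ncols t <= n by case: fr.
rewrite (unrestricted_rowP (typeB_framed tB')) e1 e2 e3 !inE /stays_free.
case: (r =P ord0) => [->|/eqP r0] /=.
  by rewrite (unrestricted_col_top _ _ _ cn) -(mem_natE S ord0).
have [k rk] : exists k, nat_of_ord r = k.+1.
  exists (nat_of_ord r).-1; rewrite prednK // lt0n.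
  by apply: contra r0 => /eqP h; apply/eqP/val_inj.
have kn : k < n by have := ltn_ord r; rewrite rk.
rewrite rk (unrestricted_col_succ _ _ _ cn kn) /= -(free_rowP fr kn).
split.
- case=> -> [gr|H]; first by rewrite -rk mem_natE in gr; rewrite gr.
  apply/orP; right; apply/forallP => r'; apply/implyP => hr'.
  by rewrite -mem_natE; apply: H.
- case/andP => -> /orP[rS|/forallP H]; split => //; first by left; rewrite -rk mem_natE.
  right => r' hr'; rewrite /mem_nat; case: insubP => //= r'' _ e.
  by have := H r''; rewrite e ltnS hr'.
Qed.

Lemma U_add_col t S : is_typeB t -> S \subset col_choices t -> S != set0 ->
  U_rows (add_col t S) = #|free_rows (col_choices t) S|.
Proof.
move=> tB sub ne; apply: eq_card => r; rewrite inE.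
by apply/idP/idP => /(unrestricted_add_col r tB sub ne).
Qed.

End Growth.

Section Shrink.
Variable n : nat.
Implicit Types (t : candB n) (T : candB n.+1).

Lemma shrink_row_spec T : is_typeB T -> last_row_empty T ->
  is_typeB (shrink T) /\ add_row (shrink T) = T.
Proof.
move=> /typeBP V hl; rewrite /shrink hl.
have V0 : valid n (ncols T) (lam_nat T) (fill_nat T) by apply/valid_add_row; split => //; exact/eqP.
have fr : framed n (ncols T) (lam_nat T) (fill_nat T) by case: V0.
have cn : ncols T <= n by case: fr.
split; first exact/encode_typeB.
by rewrite /add_row encode_ncols // (encode_lam fr) (encode_fill fr) encodeK.
Qed.

Lemma mem_nat_first_col T : is_typeB T -> mem_nat (first_col T) = fun r => fill_nat T r 0.
Proof.
move=> /typeB_framed fr; apply: functional_extensionality => r.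
rewrite /mem_nat; case: insubP => [r' _ <-|hr] /=; first by rewrite inE.
by apply/esym/negbTE/negP => /(fill_bound fr) /andP[h _]; rewrite h in hr.
Qed.

Lemma shrink_col_spec T : is_typeB T -> ~~ last_row_empty T ->
  [/\ is_typeB (shrink T), first_col T \subset col_choices (shrink T),
      first_col T != set0 & add_col (shrink T) (first_col T) = T].
Proof.
move=> TB hl; have /typeBP V := TB; rewrite /shrink (negbTE hl).
have [ce fr eL eF] := col_decompose V (ltac:(by rewrite lt0n)).
set c := (ncols T).-1 in ce fr eL eF *.
set L := (fun i => (lam_nat T i).-1) in fr eL eF *.
set F := (fun r j => fill_nat T r.+1 j.+1) in fr eL eF *.
have g_bound r : fill_nat T r 0 -> r <= n.
  by move/(fill_bound (typeB_framed TB)) => /andP[h _]; rewrite -ltnS.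
have V' : valid n.+1 c.+1 (col_lam n c L) (col_fill (fun r => fill_nat T r 0) F).
  by rewrite -ce -eL -eF.
have [V0 ne adm] := proj1 (valid_add_col fr g_bound) V'.
have cn : c <= n by case: fr.
have e1 : ncols (encode n c L F) = c by rewrite encode_ncols.
have e2 : lam_nat (encode n c L F) = L by rewrite encode_lam.
have e3 : fill_nat (encode n c L F) = F by rewrite encode_fill.
have frt : framed n (ncols (encode n c L F)) (lam_nat (encode n c L F))
  (fill_nat (encode n c L F)) by rewrite e1 e2 e3.
have col0 := mem_nat_first_col TB.
split.
- exact/encode_typeB.
- by apply/(admissible_choices _ frt); rewrite e1 e2 e3 col0.
- by apply/mem_nat_nonempty; rewrite col0.
- by rewrite /add_col e1 e2 e3 col0 -ce -eL -eF encodeK.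
Qed.

Lemma shrink_typeB T : is_typeB T -> is_typeB (shrink T).
Proof.
move=> TB; case hl: (last_row_empty T); first by case: (shrink_row_spec TB hl).
by case: (shrink_col_spec TB (negbT hl)).
Qed.

Definition col_sets t : {set {set 'I_n.+1}} :=
  [set S : {set 'I_n.+1} | (S \subset col_choices t) && (S != set0)].

Lemma shrink_fiber t : is_typeB t ->
  [set T in typeB_tableaux n.+1 | shrink T == t] =
  add_row t |: [set add_col t S | S in col_sets t].
Proof.
move=> tB; apply/setP => T; rewrite !inE; apply/idP/idP.
- case/andP => TB /eqP <-; case hl: (last_row_empty T).
    by have [_ ->] := shrink_row_spec TB hl; rewrite eqxx.
  have [_ sub ne e] := shrink_col_spec TB (negbT hl).
  by apply/orP; right; apply/imsetP; exists (first_col T); rewrite ?inE ?sub ?ne ?e.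
- case/orP => [/eqP ->|/imsetP [S]].
    by have [tB' _ _ _ _] := add_row_spec tB; rewrite tB' shrink_add_row // eqxx.
  rewrite inE => /andP[sub ne] ->.
  by have [tB' _ _ _ _] := add_col_spec tB sub ne; rewrite tB' shrink_add_col // eqxx.
Qed.

(* the top row and the rows below the U(t) unrestricted rows of t *)
Lemma card_col_choices t : #|col_choices t| = (U_rows t).+1.
Proof.
rewrite /col_choices /U_rows !card_set_sum big_ord_recl /= add1n; congr _.+1.
by apply: eq_bigr => r _; rewrite /free_row /= valK.
Qed.

Local Open Scope ring_scope.

Lemma fiber_sum (R : comNzRingType) (Y : R) t : is_typeB t ->
  \sum_(T in [set T in typeB_tableaux n.+1 | shrink T == t]) Y ^+ U_rows T
  = 2%:R * Y * (1 + Y) ^+ U_rows t.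
Proof.
move=> tB; rewrite shrink_fiber // big_setU1 /=; last first.
  apply/imsetP => -[S]; rewrite inE => /andP[sub ne] e.
  have [_ _ _ _ l1] := add_row_spec tB; have [_ _ _ _ l2] := add_col_spec tB sub ne.
  by move: l2; rewrite -e l1.
rewrite big_imset /=; last first.
  move=> S1 S2; rewrite !inE => /andP[s1 n1] /andP[s2 n2] e.
  by rewrite -(first_col_add_col tB s1 n1) -(first_col_add_col tB s2 n2) e.
rewrite U_add_row // (eq_bigr (fun S => Y ^+ #|free_rows (col_choices t) S|)); last first.
  by move=> S; rewrite inE => /andP[sub ne]; rewrite U_add_col.
have A0 : ord0 \in col_choices t by rewrite inE eqxx.
rewrite -(col_sum_card Y A0 (card_col_choices t)) addrC; congr (_ + _).
by apply: eq_bigl => S; rewrite inE.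
Qed.

End Shrink.

Local Open Scope ring_scope.

(* B_0 consists of the empty tableau alone *)
Lemma gen_fun0 (R : comNzRingType) (Y : R) :
  \sum_(t in typeB_tableaux 0) Y ^+ U_rows t = 1.
Proof.
have all_eq (t1 t2 : candB 0) : t1 = t2.
  case: t1 t2 => [[c1 l1] f1] [[c2 l2] f2].
  rewrite (ord1 c1) (ord1 c2); congr (_, _, _); apply/ffunP; by [case | case=> -[]].
pose t0 : candB 0 := encode 0 0 (fun _ => 0%N) (fun _ _ => false).
have fr0 : framed 0 0 (fun _ => 0%N) (fun _ _ => false) by [].
have t0B : is_typeB t0 by apply/(encode_typeB fr0).
rewrite (big_pred1 t0); last by move=> t; rewrite /= inE (all_eq t t0) t0B eqxx.
by rewrite /U_rows card_set_sum big_ord0.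
Qed.

(* the generating function of U over B_n, by induction from Z_(n+1)(Y) = 2 Y Z_n(1 + Y) *)
Lemma gen_fun (R : comNzRingType) n (Y : R) :
  \sum_(t in typeB_tableaux n) Y ^+ U_rows t = \prod_(j < n) ((Y + j%:R) *+ 2).
Proof.
elim: n Y => [|n IH] Y; first by rewrite gen_fun0 big_ord0.
rewrite (partition_big (@shrink n) (fun t => t \in typeB_tableaux n)) /=; last first.
  by move=> T; rewrite !inE; apply: shrink_typeB.
rewrite (eq_bigr (fun t => 2%:R * Y * (1 + Y) ^+ U_rows t)); last first.
  move=> t tB; rewrite -(fiber_sum Y); last by rewrite inE in tB.
  by apply: eq_bigl => T; rewrite !inE.
rewrite -mulr_sumr IH big_ord_recl /= addr0 mulr2n mulrDl mul1r; congr (_ * _).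
by apply: eq_bigr => j _; rewrite /bump /= add1n -natr1; congr (_ *+ 2); ring.
Qed.

Definition gen_poly n : {poly rat} := \prod_(j < n) (('X + j%:R) *+ 2).

Lemma gen_poly_at1 n :
  ((gen_poly n)^`()).[1] = (gen_poly n).[1] * harmonic n /\ (gen_poly n).[1] != 0.
Proof.
elim: n => [|n [IH1 IH2]].
  by rewrite /gen_poly /harmonic !big_ord0 -polyC1 derivC !hornerC mulr0 oner_eq0.
have split_last : gen_poly n.+1 = gen_poly n * (('X + n%:R) *+ 2).
  by rewrite /gen_poly big_ord_recr.
have nz : (1 + n%:R : rat) != 0 by rewrite addrC natr1 pnatr_eq0.
have nE : (n%:R : {poly rat}) = (n%:R)%:P by rewrite polyC_natr.
have at1 : (gen_poly n.+1).[1] = (gen_poly n).[1] * ((1 + n%:R) *+ 2).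
  by rewrite split_last hornerM hornerMn nE hornerD hornerX hornerC.
split; last by rewrite at1 mulf_neq0 // -mulr_natr mulf_neq0.
rewrite at1 split_last derivM derivMn derivD derivX nE derivC addr0.
rewrite hornerD !hornerM !hornerMn hornerD hornerX !hornerC IH1 /harmonic big_ord_recr /=.
rewrite -/(harmonic n) -natr1; field.
by rewrite natr1 pnatr_eq0.
Qed.
Local Close Scope ring_scope.

Theorem mainTheorem5 (n : nat) :
  (1 <= n)%N ->
  uniform_expect (typeB_tableaux n) (@U_rows n) = harmonic n.
Proof.
move=> _; rewrite /uniform_expect.
have Z : (\sum_(t in typeB_tableaux n) 'X ^+ U_rows t)%R = gen_poly n by apply: gen_fun.
have sumU : (\sum_(t in typeB_tableaux n) (U_rows t)%:R)%R = ((gen_poly n)^`()).[1]%R.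
  rewrite -Z raddf_sum horner_sum; apply: eq_bigr => t _.
  by rewrite /= derivXn hornerMn hornerXn expr1n.
have card : ((#|typeB_tableaux n|)%:R = (gen_poly n).[1])%R.
  by rewrite -Z horner_sum -sumr_const; apply: eq_bigr => t _; rewrite hornerXn expr1n.
have [dZ Z1] := gen_poly_at1 n.
by rewrite sumU card dZ mulrAC mulfV // mul1r.
Qed.
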